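(* Let $F$ be a field, $G$ a finite group, $V$ a finite-dimensional $FG$-module, $R:=S[V]^G$, and let $\mathcal F=\{f_1,\dots,f_n\}\subseteq R$ be a homogeneous system of parameters of $R$. Let $H\le G$ be a subgroup with $\mathrm{char}(F)\nmid[G\colon H]$ and put $S:=S[V]^H$. Let $\pi\colon R\to S/(\sum_{i=1}^n f_iS)$ be the composition of the inclusion $R\subseteq S$ with the natural projection. Then $\ker(\pi)=F[\mathcal F]_+R$, where $F[\mathcal F]_+$ is the ideal of the polynomial algebra $F[\mathcal F]$ generated by $f_1,\dots,f_n$. Consequently $\pi$ induces an injective map $R/F[\mathcal F]_+R\to S/(\sum_i f_iS)$; so if moreover $R$ is Cohen–Macaulay and $\mathcal G\subseteq R$ is a set of homogeneous elements whose cardinality and multiset of degrees agree with those of a minimal homogeneous generating set of the $F[\mathcal F]$-module $R$, then $\mathcal G$ generates $R$ as an $F[\mathcal F]$-module if and only if $\pi(\mathcal G)$ is $F$-linearly independent in $S/(\sum_i f_iS)$.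
   Context: $S[V]$ denotes the symmetric algebra over $V$ with induced $G$-action; $S[V]^G$, $S[V]^H$ the invariant subrings. A homogeneous system of parameters of $R$ is a set of $\dim R$ homogeneous elements of positive degree, algebraically independent, over whose generated polynomial subalgebra $R$ is a finitely generated module. $R$ is Cohen–Macaulay if it is a free module over this subalgebra. *)

From HB Require Import structures.
From mathcomp Require Import all_boot all_order all_algebra all_fingroup.
From mathcomp Require Import mxrepresentation.
From mathcomp Require Import mpoly.
Set Implicit Arguments. Unset Strict Implicit. Unset Printing Implicit Defensive.
Import Order.TTheory GRing.Theory.
Local Open Scope ring_scope.

(* S[V], for V = F^d (row vectors, basis e_0..e_(d-1)), is the polynomial
   ring {mpoly F[d]} in the basis vectors 'X_i = e_i.  A matrix A acts on V by
   v |-> v *m A, hence on the basis by e_i |-> sum_j A i j e_j, and this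
   extends uniquely to an F-algebra endomorphism of S[V]. *)
Definition lin_act (F : fieldType) (d : nat) (A : 'M[F]_d) (p : {mpoly F[d]})
  : {mpoly F[d]} :=
  p \mPo [tuple \sum_(j < d) A i j *: 'X_j | i < d].

Definition invariants (F : fieldType) (gT : finGroupType) (G : {set gT})
  (d : nat) (rG : gT -> 'M[F]_d) (p : {mpoly F[d]}) : Prop :=
  forall g, g \in G -> lin_act (rG g) p = p.

Definition is_homog (F : fieldType) (d : nat) (p : {mpoly F[d]}) : Prop :=
  exists k : nat, p \is k.-homog.

Definition hdeg (F : fieldType) (d : nat) (p : {mpoly F[d]}) : nat :=
  (msize p).-1.

Definition polysub (F : fieldType) (d n : nat) (f : 'I_n -> {mpoly F[d]})
  (a : {mpoly F[d]}) : Prop :=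
  exists P : {mpoly F[n]}, a = P \mPo [tuple f i | i < n].

Definition alg_indep (F : fieldType) (d n : nat) (f : 'I_n -> {mpoly F[d]})
  : Prop :=
  forall P : {mpoly F[n]}, P \mPo [tuple f i | i < n] = 0 -> P = 0.

Definition lin_comb (F : fieldType) (d : nat) (A : {mpoly F[d]} -> Prop)
  (gs : seq {mpoly F[d]}) (x : {mpoly F[d]}) : Prop :=
  exists a : 'I_(size gs) -> {mpoly F[d]},
    (forall j, A (a j)) /\ x = \sum_(j < size gs) a j * gs`_j.

Definition generates (F : fieldType) (d : nat) (A R : {mpoly F[d]} -> Prop)
  (gs : seq {mpoly F[d]}) : Prop :=
  (forall g, g \in gs -> R g) /\ (forall r, R r -> lin_comb A gs r).

Definition fin_gen_module (F : fieldType) (d : nat) (A R : {mpoly F[d]} -> Prop)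
  : Prop := exists gs : seq {mpoly F[d]}, generates A R gs.

Definition hsop (F : fieldType) (d n : nat) (R : {mpoly F[d]} -> Prop)
  (f : 'I_n -> {mpoly F[d]}) : Prop :=
  [/\ forall i, R (f i),
      forall i, exists k : nat, (0 < k)%N /\ f i \is k.-homog,
      alg_indep f
    & fin_gen_module (polysub f) R].

Definition free_module (F : fieldType) (d : nat) (A R : {mpoly F[d]} -> Prop)
  : Prop :=
  exists B : seq {mpoly F[d]},
    generates A R B /\
    (forall a : 'I_(size B) -> {mpoly F[d]}, (forall j, A (a j)) ->
       \sum_(j < size B) a j * B`_j = 0 -> forall j, a j = 0).

Definition cohen_macaulay (F : fieldType) (d n : nat) (R : {mpoly F[d]} -> Prop)
  (f : 'I_n -> {mpoly F[d]}) : Prop := free_module (polysub f) R.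

Definition Fplus (F : fieldType) (d n : nat) (f : 'I_n -> {mpoly F[d]})
  (a : {mpoly F[d]}) : Prop :=
  exists b : 'I_n -> {mpoly F[d]},
    (forall i, polysub f (b i)) /\ a = \sum_(i < n) f i * b i.

Definition FplusR (F : fieldType) (d n : nat) (f : 'I_n -> {mpoly F[d]})
  (R : {mpoly F[d]} -> Prop) (x : {mpoly F[d]}) : Prop :=
  exists s : seq ({mpoly F[d]} * {mpoly F[d]}),
    (forall q, q \in s -> Fplus f q.1 /\ R q.2) /\
    x = \sum_(q <- s) q.1 * q.2.

Definition in_ideal (F : fieldType) (d n : nat) (S : {mpoly F[d]} -> Prop)
  (f : 'I_n -> {mpoly F[d]}) (x : {mpoly F[d]}) : Prop :=
  exists s : 'I_n -> {mpoly F[d]},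
    (forall i, S (s i)) /\ x = \sum_(i < n) f i * s i.

Definition min_homog_gen (F : fieldType) (d : nat) (A R : {mpoly F[d]} -> Prop)
  (hs : seq {mpoly F[d]}) : Prop :=
  [/\ uniq hs, forall h, h \in hs -> is_homog h, generates A R hs
    & forall hs', {subset hs' <= hs} -> generates A R hs' -> {subset hs <= hs'}].

Definition lin_indep_mod (F : fieldType) (d n : nat) (S : {mpoly F[d]} -> Prop)
  (f : 'I_n -> {mpoly F[d]}) (gs : seq {mpoly F[d]}) : Prop :=
  forall c : 'I_(size gs) -> F,
    in_ideal S f (\sum_(j < size gs) c j *: gs`_j) -> forall j, c j = 0.

From Stdlib Require ClassicalEpsilon.
From HB Require Import structures.
From mathcomp Require Import all_boot all_order all_algebra all_fingroup.
From mathcomp Require Import mxrepresentation.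
From mathcomp Require Import mpoly.
Set Implicit Arguments. Unset Strict Implicit. Unset Printing Implicit Defensive.
Import Order.TTheory GRing.Theory.
Local Open Scope ring_scope.

(* The relative transfer Tr(s) = sum of g.s over representatives g of the
   cosets of H in G maps S[V]^H to R = S[V]^G, is R-linear, and multiplies
   R by [G:H], which is invertible in F.  So if r in R equals sum_i f_i s_i
   with s_i in S[V]^H, then r = [G:H]^-1 sum_i f_i Tr(s_i) lies in
   sum_i f_i R = F[f]_+ R; the converse inclusion is clear.
   For the second part put J = sum_i f_i R.  By the graded Nakayama lemma, a
   set of homogeneous elements of R generates R over F[f] iff its image spans
   R/J over F, so a minimal homogeneous generating set maps to an F-basis of
   R/J.  A set of the same cardinality therefore generates iff its image in
   R/J is linearly independent, i.e. (first part) iff its image in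
   S[V]^H / sum_i f_i S[V]^H is. *)

Section HomogeneousComponents.
Variables (R : nzRingType) (n : nat) (mf : measure n).
Implicit Types (p q : {mpoly R[n]}).

Lemma pihomog_homog k e p :
  p \is e.-homog for mf -> pihomog mf k p = if e == k then p else 0.
Proof.
move=> hp; case: eqP => [<-|/eqP ne]; first exact: pihomog_dE.
exact: pihomog_ne0 ne hp.
Qed.

Lemma pihomogMl_homog k e p q : p \is e.-homog for mf ->
  pihomog mf k (p * q) = if (e <= k)%N then p * pihomog mf (k - e) q else 0.
Proof.
move=> hp.
have hq : (mmeasure mf q <= (mmeasure mf q + k).+1)%N by rewrite leqW ?leq_addr.
rewrite {1}(pihomog_partitionE hq) mulr_sumr linear_sum /=.
under eq_bigr => j _ do rewrite (pihomog_homog k (dhomogM hp (pihomogP mf j q))).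
case: leqP => hek; last first.
  apply: big1 => j _; case: eqP => // ejk.
  by have := leq_addr j e; rewrite ejk leqNgt hek.
have hj : (k - e < (mmeasure mf q + k).+1)%N.
  by rewrite ltnS (leq_trans (leq_subr _ _)) ?leq_addl.
rewrite (bigD1 (Ordinal hj)) //= subnKC // eqxx big1 ?addr0 // => j /eqP nej.
case: eqP => // ejk; case: nej; apply: val_inj => /=.
by rewrite -[in RHS]ejk addKn.
Qed.

End HomogeneousComponents.

Section LinearAction.
Variables (F : fieldType) (d : nat).
Implicit Types (A B : 'M[F]_d) (p : {mpoly F[d]}).

Definition lin_tuple A : d.-tuple {mpoly F[d]} :=
  [tuple \sum_(j < d) A i j *: 'X_j | i < d].

HB.instance Definition _ A :=
  GRing.LRMorphism.copy (lin_act A) (comp_mpoly (lin_tuple A)).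

Lemma lin_act_tuple A B i :
  lin_act B (tnth (lin_tuple A) i) = tnth (lin_tuple (A *m B)) i.
Proof.
rewrite !tnth_mktuple rmorph_sum /=.
under eq_bigr => j _ do
  rewrite linearZ /= [lin_act _ _]comp_mpolyXU -tnth_nth tnth_mktuple scaler_sumr.
rewrite exchange_big /=; apply: eq_bigr => k _.
by rewrite mxE scaler_suml; apply: eq_bigr => j _; rewrite scalerA.
Qed.

Lemma lin_act_mulmx A B p : lin_act (A *m B) p = lin_act B (lin_act A p).
Proof.
rewrite [lin_act A p]comp_mpolyE [RHS]linear_sum [LHS]comp_mpolyE /=.
apply: eq_bigr => m _; rewrite linearZ /= rmorph_prod; congr (_ *: _).
by apply: eq_bigr => i _; rewrite rmorphXn -[RHS]/(lin_act B _ ^+ _) lin_act_tuple.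
Qed.

Lemma lin_act_monomial_homog A m : lin_act A 'X_[m] \is (mdeg m).-homog.
Proof.
rewrite [lin_act _ _]comp_mpolyX mdegE.
apply: (big_ind2 (fun p k => p \is k.-homog)) => [|p k q l|i _]; first exact: dhomog1.
  exact: dhomogM.
rewrite -[X in X.-homog]mul1n; apply: dhomogMn.
rewrite tnth_mktuple; apply: rpred_sum => j _; apply: rpredZ.
by rewrite dhomogX; apply/eqP; exact: mdeg1.
Qed.

Lemma pihomog_lin_act A k p :
  pihomog mdeg k (lin_act A p) = lin_act A (pihomog mdeg k p).
Proof.
rewrite [lin_act A p]comp_mpolyEX linear_sum [in RHS]pihomogE linear_sum.
rewrite [RHS]big_mkcond /=.
apply: eq_bigr => m _; rewrite !linearZ /= -[_ \mPo _]/(lin_act A _).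
rewrite (pihomog_homog k (lin_act_monomial_homog A m)).
by case: eqP; rewrite ?scaler0 ?linear0.
Qed.

End LinearAction.

Section SubalgebraPredicates.
Variables (F : fieldType) (d : nat).
Implicit Types (p q : {mpoly F[d]}).

Definition subalg_pred (S : {mpoly F[d]} -> Prop) : Prop :=
  [/\ forall c, S c%:MP, forall p q, S p -> S q -> S (p + q)
    & forall p q, S p -> S q -> S (p * q)].

Variable S : {mpoly F[d]} -> Prop.
Hypothesis subS : subalg_pred S.

Lemma subalg0 : S 0.
Proof. by case: subS => SC _ _; rewrite -mpolyC0; apply: SC. Qed.

Lemma subalg1 : S 1.
Proof. by case: subS => SC _ _; rewrite -mpolyC1; apply: SC. Qed.

Lemma subalgD p q : S p -> S q -> S (p + q).
Proof. by case: subS => _ SD _; apply: SD. Qed.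

Lemma subalgM p q : S p -> S q -> S (p * q).
Proof. by case: subS => _ _ SM; apply: SM. Qed.

Lemma subalgZ c p : S p -> S (c *: p).
Proof. by case: subS => SC _ _ Sp; rewrite -mul_mpolyC; apply: subalgM (SC c) Sp. Qed.

Lemma subalg_sum (I : Type) (r : seq I) (P : pred I) (E : I -> {mpoly F[d]}) :
  (forall i, P i -> S (E i)) -> S (\sum_(i <- r | P i) E i).
Proof. by move=> SE; apply: big_ind SE; [exact: subalg0 | exact: subalgD]. Qed.

Lemma subalg_prod (I : Type) (r : seq I) (P : pred I) (E : I -> {mpoly F[d]}) :
  (forall i, P i -> S (E i)) -> S (\prod_(i <- r | P i) E i).
Proof. by move=> SE; apply: big_ind SE; [exact: subalg1 | exact: subalgM]. Qed.

Lemma subalgX p k : S p -> S (p ^+ k).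
Proof.
by move=> Sp; elim: k => [|k Spk]; [exact: subalg1 | rewrite exprS; apply: subalgM].
Qed.

Lemma polysub_sub n (f : 'I_n -> {mpoly F[d]}) p :
  (forall i, S (f i)) -> polysub f p -> S p.
Proof.
move=> Sf [P ->]; rewrite comp_mpolyE; apply: subalg_sum => m _.
by apply/subalgZ/subalg_prod => i _; rewrite tnth_mktuple; apply: subalgX.
Qed.

Section Ideal.
Variables (n : nat) (f : 'I_n -> {mpoly F[d]}).
Local Notation J := (in_ideal S f).

Lemma in_ideal0 : J 0.
Proof.
exists (fun=> 0); split=> [i|]; first exact: subalg0.
by rewrite big1 // => i _; rewrite mulr0.
Qed.

Lemma in_idealD p q : J p -> J q -> J (p + q).
Proof.
move=> [s [Ss ->]] [t [St ->]]; exists (fun i => s i + t i); split=> [i|].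
  exact: subalgD.
by rewrite -big_split; apply: eq_bigr => i _; rewrite mulrDr.
Qed.

Lemma in_idealMl p q : S p -> J q -> J (p * q).
Proof.
move=> Sp [s [Ss ->]]; exists (fun i => p * s i); split=> [i|].
  exact: subalgM.
by rewrite mulr_sumr; apply: eq_bigr => i _; rewrite mulrCA.
Qed.

Lemma in_idealZ c p : J p -> J (c *: p).
Proof. by rewrite -mul_mpolyC; apply: in_idealMl; case: subS. Qed.

Lemma in_idealN p : J p -> J (- p).
Proof. by rewrite -scaleN1r; apply: in_idealZ. Qed.

Lemma in_idealB p q : J p -> J q -> J (p - q).
Proof. by move=> Jp Jq; apply/in_idealD/in_idealN. Qed.

Lemma in_ideal_sum (I : Type) (r : seq I) (P : pred I) (E : I -> {mpoly F[d]}) :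
  (forall i, P i -> J (E i)) -> J (\sum_(i <- r | P i) E i).
Proof. by move=> JE; apply: big_ind JE; [exact: in_ideal0 | exact: in_idealD]. Qed.

Lemma in_ideal_gen i p : S p -> J (f i * p).
Proof.
move=> Sp; exists (fun j => if j == i then p else 0); split=> [j|].
  by case: eqP => _ //; exact: subalg0.
rewrite (bigD1 i) //= eqxx big1 ?addr0 // => j /negbTE ->; exact: mulr0.
Qed.

End Ideal.
End SubalgebraPredicates.

Section GeneratedSubalgebra.
Variables (F : fieldType) (d n : nat) (f : 'I_n -> {mpoly F[d]}).
Local Notation A := (polysub f).

Lemma polysub_subalg : subalg_pred A.
Proof.
split=> [c|_ _ [P ->] [Q ->]|_ _ [P ->] [Q ->]].
- by exists c%:MP; rewrite comp_mpolyC.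
- by exists (P + Q); rewrite rmorphD.
- by exists (P * Q); rewrite rmorphM.
Qed.

Lemma polysub_gen i : A (f i).
Proof. by exists 'X_i; rewrite comp_mpolyXU -tnth_nth tnth_mktuple. Qed.

Lemma Fplus_gen i : Fplus f (f i).
Proof.
rewrite -[f i]mulr1; apply: (in_ideal_gen polysub_subalg).
exact: subalg1 polysub_subalg.
Qed.

Lemma polysub_const_part a : A a -> exists c : F, Fplus f (a - c%:MP).
Proof.
move=> Aa; pose K b := A b /\ exists c : F, in_ideal A f (b - c%:MP).
have subK : subalg_pred K.
  have subA := polysub_subalg.
  split=> [c|p q [Ap [c Jp]] [Aq [e Jq]]|p q [Ap [c Jp]] [Aq [e Jq]]].
  - split; first by case: subA.
    by exists c; rewrite subrr; apply: in_ideal0.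
  - split; first exact: subalgD.
    exists (c + e); rewrite mpolyCD opprD addrACA; exact: in_idealD.
  - split; first exact: subalgM.
    exists (c * e).
    have -> : p * q - (c * e)%:MP = q * (p - c%:MP) + c%:MP * (q - e%:MP).
      by rewrite mpolyCM mulrBr mulrBr [q * p]mulrC [q * _]mulrC addrA subrK.
    by apply: (in_idealD subA); apply: (in_idealMl subA) => //; case: subA.
have Kf i : K (f i).
  by split; [exact: polysub_gen | exists 0; rewrite subr0; exact: Fplus_gen].
by case: (polysub_sub subK Kf Aa).
Qed.

Variable S : {mpoly F[d]} -> Prop.
Hypotheses (subS : subalg_pred S) (Sf : forall i, S (f i)).

Lemma in_ideal_Fplus_mulr a r : Fplus f a -> S r -> in_ideal S f (a * r).
Proof.
move=> [b [Ab ->]] Sr; rewrite mulr_suml; apply: (in_ideal_sum subS) => i _.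
by rewrite -mulrA; apply/(in_ideal_gen subS)/(subalgM subS _ Sr)/(polysub_sub subS Sf).
Qed.

Lemma FplusR_in_ideal x : FplusR f S x <-> in_ideal S f x.
Proof.
split=> [[s [hs ->]]|[s [Ss ->]]].
  rewrite big_seq; apply: (in_ideal_sum subS) => q /hs [].
  exact: in_ideal_Fplus_mulr.
exists [seq (f i, s i) | i <- enum 'I_n]; split; last by rewrite big_map big_enum.
by move=> q /mapP [i _ ->]; split; [exact: Fplus_gen | exact: Ss].
Qed.

End GeneratedSubalgebra.

Section Invariants.
Variables (F : fieldType) (gT : finGroupType) (G : {group gT}) (d : nat).
Variable rG : mx_representation F G d.
Implicit Types (K : {set gT}) (p q : {mpoly F[d]}).

Lemma invariants_subalg K : subalg_pred (invariants K rG).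
Proof.
split=> [c g _|p q Sp Sq g Kg|p q Sp Sq g Kg].
- exact: comp_mpolyC.
- by rewrite rmorphD /= Sp ?Sq.
- by rewrite rmorphM /= Sp ?Sq.
Qed.

Lemma invariants_pihomog K k p :
  invariants K rG p -> invariants K rG (pihomog mdeg k p).
Proof. by move=> Kp g Kg; rewrite -pihomog_lin_act Kp. Qed.

Lemma invariantsS (K L : {set gT}) p :
  K \subset L -> invariants L rG p -> invariants K rG p.
Proof. by move=> sKL Lp g Kg; apply/Lp/(subsetP sKL). Qed.

Section Transfer.
Variable H : {group gT}.
Hypothesis sHG : H \subset G.

Definition transfer p := \sum_(C in rcosets H G) lin_act (rG (repr C)) p.

Lemma repr_rcosets C : C \in rcosets H G -> repr C \in G.
Proof.
case/rcosetsP => x Gx ->; have := mem_repr_rcoset H x.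
by rewrite mem_rcoset => /(subsetP sHG) Hr; rewrite -(mulgKV x (repr _)) groupM.
Qed.

Lemma lin_act_rcoset x y p : y \in G -> (x * y^-1)%g \in H ->
  invariants H rG p -> lin_act (rG x) p = lin_act (rG y) p.
Proof.
move=> Gy Hxy Hp; rewrite -[x](mulgKV y) repr_mxM ?(subsetP sHG _ Hxy) //.
by rewrite lin_act_mulmx Hp.
Qed.

Lemma transfer_invariant p : invariants H rG p -> invariants G rG (transfer p).
Proof.
move=> Hp g Gg; rewrite /transfer rmorph_sum /=.
(* right multiplication by g permutes the cosets of H in G *)
rewrite [RHS](reindex_acts 'Rs (actsRs_rcosets H G) Gg).
apply: eq_bigr => C HGC; rewrite -lin_act_mulmx -repr_mxM ?repr_rcosets //=.
apply: lin_act_rcoset => //.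
  by rewrite repr_rcosets // (actsP (actsRs_rcosets H G)).
case/rcosetsP: HGC => x Gx defC.
have Cg : (repr C * g \in H :* (x * g))%g.
  by rewrite mem_rcoset invMg mulgA mulgK -mem_rcoset defC mem_repr_rcoset.
have Cg' : (repr (rcoset C g) \in H :* (x * g))%g.
  by rewrite rcosetE defC -rcosetM mem_repr_rcoset.
by rewrite -mem_rcoset (rcoset_eqP Cg').
Qed.

Lemma transfer_id r : invariants G rG r -> transfer r = r *+ #|G : H|%g.
Proof.
move=> Gr; rewrite /transfer (eq_bigr (fun=> r)) ?sumr_const // => C HGC.
exact/Gr/repr_rcosets.
Qed.

Lemma transferMl r p : invariants G rG r -> transfer (r * p) = r * transfer p.
Proof.
move=> Gr; rewrite /transfer mulr_sumr; apply: eq_bigr => C HGC.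
by rewrite rmorphM /= Gr ?repr_rcosets.
Qed.

Lemma transfer_sum (I : Type) (s : seq I) (P : pred I) (E : I -> {mpoly F[d]}) :
  transfer (\sum_(i <- s | P i) E i) = \sum_(i <- s | P i) transfer (E i).
Proof.
by rewrite /transfer; under eq_bigr do rewrite rmorph_sum; exact: exchange_big.
Qed.

End Transfer.
End Invariants.

Lemma natf_neq0_ndvd_pchar (F : fieldType) m : (0 < m)%N ->
  (forall p, p \in [pchar F] -> ~~ (p %| m)%N) -> m%:R != 0 :> F.
Proof.
move=> m_gt0 ndvd; rewrite natf_neq0_pchar; apply/pnatP => // p _ p_dvd.
by apply/negP => /ndvd; rewrite p_dvd.
Qed.

Section RelativeTransfer.
Variables (F : fieldType) (gT : finGroupType) (G H : {group gT}) (d n : nat).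
Variables (rG : mx_representation F G d) (f : 'I_n -> {mpoly F[d]}).
Hypotheses (sHG : H \subset G) (Gf : forall i, invariants G rG (f i)).
Hypothesis index_neq0 : (#|G : H|%g)%:R != 0 :> F.

Lemma in_ideal_invariants_subgroup r : invariants G rG r ->
  in_ideal (invariants H rG) f r <-> in_ideal (invariants G rG) f r.
Proof.
move=> Gr; split=> [[s [Hs er]]|[s [Gs ->]]]; last first.
  by exists s; split=> // i; apply: invariantsS sHG (Gs i).
have subG := invariants_subalg rG G.
have -> : r = (#|G : H|%g)%:R^-1 *: transfer rG H r.
  by rewrite transfer_id // -scaler_nat scalerA mulVf // scale1r.
apply: (in_idealZ subG); rewrite er transfer_sum; apply: (in_ideal_sum subG) => i _.
by rewrite transferMl //; apply/(in_ideal_gen subG)/transfer_invariant.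
Qed.

Lemma lin_indep_mod_invariants_subgroup gs :
  (forall g, g \in gs -> invariants G rG g) ->
  lin_indep_mod (invariants H rG) f gs <-> lin_indep_mod (invariants G rG) f gs.
Proof.
move=> Ggs; have subG := invariants_subalg rG G.
have Gsum c : invariants G rG (\sum_(k < size gs) c k *: gs`_k).
  by apply: (subalg_sum subG) => k _; apply/(subalgZ subG)/Ggs/mem_nth.
split=> indep c /(in_ideal_invariants_subgroup (Gsum c)) Jc.
  exact/indep/Jc.
exact/indep/Jc.
Qed.

End RelativeTransfer.

Lemma sum_nth_uniq (K : nzRingType) (V : lmodType K) (L : seq V)
    (c : 'I_(size L) -> K) : uniq L ->
  \sum_(y <- L) (\sum_(j < size L | L`_j == y) c j) *: y
    = \sum_(j < size L) c j *: L`_j.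
Proof.
move=> uL; rewrite (big_nth 0) big_mkord; apply: eq_bigr => j _; congr (_ *: _).
rewrite (eq_bigl (pred1 j)) ?big_pred1_eq // => i /=.
by rewrite nth_uniq.
Qed.

Section ModuleGenerators.
Variables (F : fieldType) (d n : nat) (f : 'I_n -> {mpoly F[d]}).
Variable R : {mpoly F[d]} -> Prop.
Hypotheses (subR : subalg_pred R) (Rf : forall i, R (f i)).
Hypothesis gradedR : forall k p, R p -> R (pihomog mdeg k p).
Hypothesis homf : forall i, exists k, (0 < k)%N /\ f i \is k.-homog.
Local Notation A := (polysub f).
Local Notation J := (in_ideal R f).

Definition span_mod (L : seq {mpoly F[d]}) : Prop :=
  forall r, R r -> exists c : 'I_(size L) -> F,
    J (r - \sum_(j < size L) c j *: L`_j).

Lemma lin_combE L x :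
  lin_comb A L x <-> in_ideal A (fun j : 'I_(size L) => L`_j) x.
Proof.
by split=> -[a [Aa ->]]; exists a; split=> //; apply: eq_bigr => j _; rewrite mulrC.
Qed.

Lemma generates_span_mod L : generates A R L -> span_mod L.
Proof.
move=> [RL genL] r Rr; have [a [Aa ->]] := genL r Rr.
have /(ClassicalEpsilon.choice _) [c Jc] j := polysub_const_part (Aa j).
exists c; rewrite -sumrB; apply: (in_ideal_sum subR) => j _.
rewrite -mul_mpolyC -mulrBl; apply: in_ideal_Fplus_mulr => //.
exact/RL/mem_nth.
Qed.

(* Graded Nakayama lemma, by induction on the degree: this is where the
   positivity of the degrees of the f_i is used. *)
Lemma span_mod_generates L : (forall y, y \in L -> R y /\ is_homog y) ->
  span_mod L -> generates A R L.
Proof.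
move=> RL spanL; split=> [y /RL[] // | r Rr].
have subA := polysub_subalg f.
pose JL := in_ideal A (fun j : 'I_(size L) => L`_j).
suff hom k p : R p -> p \is k.-homog -> JL p.
  apply/lin_combE; rewrite (pihomog_partitionE (leqnn (msize r))).
  apply: (in_ideal_sum subA) => k _; apply: hom (pihomogP _ _ _); exact: gradedR.
elim/ltn_ind: k p => k IH p Rp homp; have [c [rho [Rrho Jp]]] := spanL p Rp.
rewrite -(pihomog_dE homp).
have -> : p = \sum_i f i * rho i + \sum_(j < size L) c j *: L`_j by rewrite -Jp subrK.
rewrite linearD !linear_sum /=.
apply: (in_idealD subA); apply: (in_ideal_sum subA) => i _.
  have [e [e_gt0 homfi]] := homf i; rewrite (pihomogMl_homog k _ homfi).
  case: leqP => [le_ek | _]; last exact: in_ideal0.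
  apply: (in_idealMl subA (polysub_gen f i)).
  apply: IH (pihomogP _ _ _); last exact: gradedR.
  by rewrite ltn_subrL e_gt0 (leq_trans e_gt0 le_ek).
have [_ [e homLi]] := RL _ (mem_nth 0 (ltn_ord i)).
rewrite linearZ /= (pihomog_homog k homLi); case: eqP => _; last first.
  by rewrite scaler0; exact: in_ideal0.
by rewrite -mul_mpolyC mulrC; apply: (in_ideal_gen subA); case: subA.
Qed.

(* If c k != 0, then modulo J the element hs`_k is a combination of the
   others, which by Nakayama then still generate R: minimality fails. *)
Lemma min_homog_gen_indep hs : min_homog_gen A R hs -> lin_indep_mod R f hs.
Proof.
move=> [uhs homhs genhs minhs] c Jc k; have [//|ck_neq0] := eqVneq (c k) 0.
pose hk := hs`_k; pose hs' := filter (predC1 hk) hs.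
have sub' : {subset hs' <= hs} by move=> y; rewrite mem_filter => /andP[].
suff /(minhs _ sub') /(_ hk (mem_nth 0 (ltn_ord k))) : generates A R hs'.
  by rewrite mem_filter /= eqxx.
apply: span_mod_generates => [y /sub' hy|r Rr].
  by split; [apply: genhs.1 | apply: homhs].
have [c' Jc'] := generates_span_mod genhs Rr.
pose E j := c' j - c' k / c k * c j.
pose e y := \sum_(j < size hs | hs`_j == y) E j.
have ehk : e hk = 0.
  rewrite /e (eq_bigl (pred1 k)) ?big_pred1_eq => [|j /=]; last by rewrite nth_uniq.
  by rewrite /E divfK ?subrr.
exists (fun j => e hs'`_j).
have -> : \sum_(j < size hs') e hs'`_j *: hs'`_j = \sum_(j < size hs) E j *: hs`_j.
  transitivity (\sum_(y <- hs') e y *: y); first by rewrite (big_nth 0) big_mkord.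
  rewrite -sum_nth_uniq // big_filter.
  rewrite [RHS](bigID (pred1 hk)) /= [X in _ = X + _]big1 ?add0r // => y /eqP ->.
  by rewrite -/(e hk) ehk scale0r.
have -> : \sum_(j < size hs) E j *: hs`_j =
    \sum_(j < size hs) c' j *: hs`_j
    - (c' k / c k) *: \sum_(j < size hs) c j *: hs`_j.
  by rewrite scaler_sumr -sumrB; apply: eq_bigr => j _; rewrite scalerA scalerBl.
by rewrite opprB addrA addrAC; apply: (in_idealD subR) => //; apply: (in_idealZ subR).
Qed.

Section CoordinateMatrix.
Variables (gs hs : seq {mpoly F[d]}) (M : 'M[F]_(size gs, size hs)).
Hypothesis coordM :
  forall k : 'I_(size gs), J (gs`_k - \sum_(j < size hs) M k j *: hs`_j).

Lemma in_ideal_coord_mx (v : 'rV[F]_(size gs)) :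
  J (\sum_(k < size gs) v 0 k *: gs`_k - \sum_(j < size hs) (v *m M) 0 j *: hs`_j).
Proof.
have -> : \sum_(j < size hs) (v *m M) 0 j *: hs`_j =
    \sum_(k < size gs) v 0 k *: \sum_(j < size hs) M k j *: hs`_j.
  under eq_bigr => j _ do rewrite mxE scaler_suml.
  rewrite exchange_big; apply: eq_bigr => k _; rewrite scaler_sumr.
  by apply: eq_bigr => j _; rewrite scalerA.
rewrite -sumrB; apply: (in_ideal_sum subR) => k _.
by rewrite -scalerBr; apply: in_idealZ.
Qed.

Hypothesis indep_hs : lin_indep_mod R f hs.

Lemma lin_indep_mod_row_free : lin_indep_mod R f gs <-> row_free M.
Proof.
split=> [indep_gs | freeM c Jc k].
  rewrite -kermx_eq0; apply/eqP/row_matrixP => i; rewrite row0.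
  set w := row i (kermx M).
  have wM0 : w *m M = 0 by rewrite -row_mul mulmx_ker row0.
  apply/rowP => k; rewrite [RHS]mxE; move: k; apply: indep_gs.
  have := in_ideal_coord_mx w; rewrite wM0.
  by under [X in _ - X]eq_bigr do rewrite mxE scale0r; rewrite big1_eq subr0.
pose v := \row_(k < size gs) c k.
suff /(row_free_inj freeM) /rowP /(_ k) : v *m M = 0 *m M by rewrite /v !mxE.
rewrite mul0mx; apply/rowP => j; rewrite [RHS]mxE; move: j; apply: indep_hs.
have := in_idealB subR Jc (in_ideal_coord_mx v).
by under [X in _ - (X - _)]eq_bigr do rewrite mxE; rewrite opprB addrC subrK.
Qed.

Hypotheses (Rhs : forall j : 'I_(size hs), R hs`_j) (span_hs : span_mod hs).

Lemma span_mod_row_full : span_mod gs <-> row_full M.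
Proof.
split=> [span_gs | /row_fullP [B BM1] r Rr].
  have /(ClassicalEpsilon.choice _) [c Jc] j := span_gs _ (Rhs j).
  pose C := \matrix_(j, k) c j k; apply/row_fullP; exists C.
  apply/matrixP => j l; apply/eqP; rewrite -subr_eq0; apply/eqP; move: l.
  apply: indep_hs; have := in_idealD subR (Jc j) (in_ideal_coord_mx (row j C)).
  have rowC : \sum_(k < size gs) (row j C) 0 k *: gs`_k
              = \sum_(k < size gs) c j k *: gs`_k.
    by apply: eq_bigr => k _; rewrite !mxE.
  have id_hs : \sum_(l < size hs) (1%:M : 'M_(size hs)) j l *: hs`_l = hs`_j.
    rewrite (bigD1 j) //= mxE eqxx scale1r big1 ?addr0 // => l ne_lj.
    by rewrite mxE eq_sym (negbTE ne_lj) scale0r.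
  rewrite rowC addrA subrK -row_mul => /(in_idealN subR).
  rewrite opprB -{1}id_hs -sumrB; congr J; apply: eq_bigr => l _.
  by rewrite !mxE scalerBl.
have [a Ja] := span_hs Rr; pose v := \row_(j < size hs) a j *m B.
exists (fun k => v 0 k).
have vM : v *m M = \row_(j < size hs) a j by rewrite -mulmxA BM1 mulmx1.
have := in_idealB subR Ja (in_ideal_coord_mx v); rewrite vM.
by under [X in _ - (_ - X)]eq_bigr do rewrite mxE; rewrite opprB addrA subrK.
Qed.

End CoordinateMatrix.

Lemma span_mod_iff_lin_indep_mod gs hs : size gs = size hs ->
  (forall g, g \in gs -> R g) -> (forall h, h \in hs -> R h) ->
  span_mod hs -> lin_indep_mod R f hs ->
  span_mod gs <-> lin_indep_mod R f gs.
Proof.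
move=> hsz Rgs Rhs span_hs indep_hs.
have /(ClassicalEpsilon.choice _) [c Jc] k :=
  span_hs _ (Rgs _ (mem_nth 0 (ltn_ord k))).
pose M := \matrix_(k < size gs, j < size hs) c k j.
have coordM (k : 'I_(size gs)) : J (gs`_k - \sum_(j < size hs) M k j *: hs`_j).
  by under eq_bigr do rewrite mxE.
rewrite (span_mod_row_full coordM) ?(lin_indep_mod_row_free coordM) // => [|j].
  by rewrite /row_free /row_full; move: (\rank M) => rk; rewrite hsz.
exact/Rhs/mem_nth.
Qed.

End ModuleGenerators.

Theorem mainTheorem3 (F : fieldType) (gT : finGroupType) (G H : {group gT})
  (d n : nat) (rG : mx_representation F G d) (f : 'I_n -> {mpoly F[d]}) :
  hsop (invariants G rG) f ->
  H \subset G ->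
  (forall p : nat, p \in [pchar F] -> ~~ (p %| #|G : H|%g)%N) ->
  (forall r, invariants G rG r ->
     (in_ideal (invariants H rG) f r <-> FplusR f (invariants G rG) r)) /\
  (cohen_macaulay (invariants G rG) f ->
   forall gs : seq {mpoly F[d]},
     uniq gs ->
     (forall g, g \in gs -> invariants G rG g /\ is_homog g) ->
     (exists hs, min_homog_gen (polysub f) (invariants G rG) hs /\
        size gs = size hs /\ perm_eq (map (@hdeg F d) gs) (map (@hdeg F d) hs)) ->
     (generates (polysub f) (invariants G rG) gs <->
      lin_indep_mod (invariants H rG) f gs)).
Proof.
move=> [Gf homf _ _] sHG ndvd.
have subG := invariants_subalg rG G.
have index_neq0 := natf_neq0_ndvd_pchar (indexg_gt0 G H) ndvd.
split=> [r Gr | _ gs _ Ggs [hs [minhs [size_gs _]]]].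
  apply: iff_trans (in_ideal_invariants_subgroup sHG Gf index_neq0 Gr) _.
  exact: iff_sym (FplusR_in_ideal subG Gf r).
have [_ homhs genhs _] := minhs; have Rgs g (gs_g : g \in gs) := (Ggs g gs_g).1.
have graded := @invariants_pihomog _ _ G d rG G.
apply: iff_trans _
  (iff_sym (lin_indep_mod_invariants_subgroup sHG Gf index_neq0 Rgs)).
apply: iff_trans (span_mod_iff_lin_indep_mod subG size_gs Rgs genhs.1 _ _).
- by split; [exact: generates_span_mod | exact: span_mod_generates].
- exact: generates_span_mod genhs.
- exact: min_homog_gen_indep minhs.
Qed.
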